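(* Let $\lambda\in\Lambda$ and let $(\beta_1,\dots,\beta_l)$ be a reduced $\lambda$-chain of roots. If $\alpha\in\Phi$ satisfies $(\lambda,\alpha^\vee)\ge0$, then $\#\{i:\beta_i=\alpha\}=(\lambda,\alpha^\vee)$ and $\#\{i:\beta_i=-\alpha\}=0$. In particular, if $\lambda$ is dominant all $\beta_i$ are positive roots, and if $\lambda$ is antidominant all $\beta_i$ are negative roots.
   Context: $\Phi$ is an irreducible (crystallographic) root system in $\mathfrak h_{\mathbb R}^*$ with positive roots $\Phi^+$, simple roots $\alpha_1,\dots,\alpha_r$, coroots $\alpha^\vee=2\alpha/(\alpha,\alpha)$, Weyl group $W$, weight lattice $\Lambda=\{\lambda:(\lambda,\alpha^\vee)\in\mathbb Z\ \forall\alpha\}$. $\lambda$ is dominant if $(\lambda,\alpha^\vee)\ge0$ for all $\alpha\in\Phi^+$, antidominant if $-\lambda$ is dominant. For $\alpha\in\Phi,k\in\mathbb Z$: $s_{\alpha,k}(\lambda)=\lambda-((\lambda,\alpha^\vee)-k)\alpha$. $W_{\mathrm{aff}}$ is generated by $s_0=s_{\alpha_0,-1}$ and $s_i=s_{\alpha_i,0}$, where $\alpha_0=-\theta$ and $\theta^\vee$ is the highest coroot. $\bar v\in W$ is the linear part of $v\in W_{\mathrm{aff}}$ ($\bar s_{\alpha,k}=s_\alpha$). $A_\circ=\{\lambda:0<(\lambda,\alpha^\vee)<1\ \forall\alpha\in\Phi^+\}$, and $v_{-\lambda}$ is the unique element of $W_{\mathrm{aff}}$ with $v_{-\lambda}(A_\circ)=A_\circ-\lambda$.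 The $\lambda$-chain of roots associated with a decomposition $v_{-\lambda}=s_{i_1}\cdots s_{i_l}$ is $(\beta_1,\dots,\beta_l)$, $\beta_j=\bar s_{i_1}\cdots\bar s_{i_{j-1}}(\alpha_{i_j})$; it is reduced if the decomposition has minimal length. *)

(* the ambient space h_R^* is 'rV[R]_r with R : realType and
   the standard dot product (any finite-dim. real Euclidean space is isometric
   to this). *)
From HB Require Import structures.
From mathcomp Require Import all_boot all_order all_algebra.
From mathcomp Require Import reals.
Set Implicit Arguments. Unset Strict Implicit. Unset Printing Implicit Defensive.
Import Order.TTheory GRing.Theory Num.Theory.
Local Open Scope ring_scope.

Section RootSystems.
Variables (R : realType) (r : nat).
Notation V := 'rV[R]_r.

Definition dot (u v : V) : R := (u *m v^T) 0 0.
Definition coroot (a : V) : V := (2 / dot a a) *: a.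
Definition pairing (l a : V) : R := dot l (coroot a).

Definition sref (a : V) (k : R) (mu : V) : V := mu - (pairing mu a - k) *: a.

(* Phi is an irreducible, reduced, crystallographic root system spanning V
   (spanning follows from the existence of a base below). *)
Definition is_irred_cryst_root_system (Phi : seq V) : Prop :=
  [/\ 0 \notin Phi,
      (forall a b, a \in Phi -> b \in Phi -> sref a 0 b \in Phi),
      (forall a b, a \in Phi -> b \in Phi -> pairing b a \is a Num.int),
      (forall a (c : R), a \in Phi -> c *: a \in Phi -> c = 1 \/ c = -1)
    & (forall P : pred V,
         (forall b c, b \in Phi -> c \in Phi -> P b -> ~~ P c -> dot b c = 0) ->
         {subset Phi <= P} \/ {subset Phi <= predC P})].

Definition is_simple_roots (Phi : seq V) (al : 'I_r -> V) : Prop :=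
  [/\ forall i, al i \in Phi,
      (forall c : 'I_r -> R, \sum_i c i *: al i = 0 -> forall i, c i = 0)
    & forall b, b \in Phi -> exists c : 'I_r -> int,
        b = \sum_i (c i)%:~R *: al i /\
        ((forall i, 0 <= c i) \/ (forall i, c i <= 0))].

Definition pos_root (Phi : seq V) (al : 'I_r -> V) (b : V) : Prop :=
  b \in Phi /\ exists c : 'I_r -> R, (forall i, 0 <= c i) /\ b = \sum_i c i *: al i.

Definition highest_coroot (Phi : seq V) (al : 'I_r -> V) (th : V) : Prop :=
  th \in Phi /\ forall b, b \in Phi -> exists c : 'I_r -> R,
    (forall i, 0 <= c i) /\ coroot th - coroot b = \sum_i c i *: coroot (al i).

Definition weight (Phi : seq V) (l : V) : Prop :=
  forall a, a \in Phi -> pairing l a \is a Num.int.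

Definition dominant (Phi : seq V) (al : 'I_r -> V) (l : V) : Prop :=
  forall a, pos_root Phi al a -> 0 <= pairing l a.

Definition antidominant (Phi : seq V) (al : 'I_r -> V) (l : V) : Prop :=
  dominant Phi al (- l).

Definition alcove0 (Phi : seq V) (al : 'I_r -> V) (x : V) : Prop :=
  forall a, pos_root Phi al a -> 0 < pairing x a /\ pairing x a < 1.

(* generators of W_aff are indexed by option 'I_r : None is s_0, Some i is s_i *)
Definition aroot (al : 'I_r -> V) (th : V) (i : option 'I_r) : V :=
  match i with None => - th | Some j => al j end.
Definition ashift (i : option 'I_r) : R :=
  match i with None => -1 | Some _ => 0 end.

Definition wmap (al : 'I_r -> V) (th : V) (w : seq (option 'I_r)) : V -> V :=
  foldr (fun i f => sref (aroot al th i) (ashift i) \o f) id w.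

Definition wlin (al : 'I_r -> V) (th : V) (w : seq (option 'I_r)) : V -> V :=
  foldr (fun i f => sref (aroot al th i) 0 \o f) id w.

(* w is a decomposition of v_{-lambda}: the product maps A_o onto A_o - lambda *)
Definition decomp_vml (Phi : seq V) (al : 'I_r -> V) (th l : V)
    (w : seq (option 'I_r)) : Prop :=
  forall y, (exists2 x, alcove0 Phi al x & wmap al th w x = y) <->
            alcove0 Phi al (y + l).

Definition reduced_word (al : 'I_r -> V) (th : V) (w : seq (option 'I_r)) : Prop :=
  forall w', wmap al th w' =1 wmap al th w -> (size w <= size w')%N.

Definition chain (al : 'I_r -> V) (th : V) (w : seq (option 'I_r)) : seq V :=
  [seq wlin al th (take k w) (aroot al th (nth None w k)) | k <- iota 0 (size w)].

End RootSystems.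

(* Fix x in the fundamental alcove A_o and a root a, and let w_k be the product of the
   first k letters of the word. Since w_(k+1) = s_(beta_k, m_k) w_k for an integer m_k,
   the alcoves w_k(A_o) form a gallery from A_o to A_o - lambda whose k-th step crosses
   the hyperplane H_(beta_k, m_k). Hence the level floor (w_k x, a^vee) goes down by one
   when beta_k = a, up by one when beta_k = -a, and is constant otherwise; in total it goes
   down by (lambda, a^vee). A reduced word never crosses the same hyperplane twice, so the
   gallery cannot cross the hyperplanes H_(a, m) in both directions, and since
   (lambda, a^vee) >= 0 all these crossings go down. *)

From HB Require Import structures.
From mathcomp Require Import all_boot all_order all_algebra.
From mathcomp Require Import reals.
From mathcomp Require Import ring lra zify.
Set Implicit Arguments. Unset Strict Implicit. Unset Printing Implicit Defensive.
Import Order.TTheory GRing.Theory Num.Theory.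
Local Open Scope ring_scope.

Section Euclidean.
Variables (R : realType) (r : nat).
Local Notation V := 'rV[R]_r.
Implicit Types (u v y a b : V).

Lemma dotE u v : dot u v = \sum_j u 0 j * v 0 j.
Proof. by rewrite /dot mxE; apply: eq_bigr => j _; rewrite mxE. Qed.

Lemma dotC u v : dot u v = dot v u.
Proof. by rewrite !dotE; apply: eq_bigr => j _; rewrite mulrC. Qed.

Lemma dotDl u v y : dot (u + v) y = dot u y + dot v y.
Proof. by rewrite !dotE -big_split; apply: eq_bigr => j _; rewrite !mxE mulrDl. Qed.

Lemma dotZl c u y : dot (c *: u) y = c * dot u y.
Proof. by rewrite !dotE mulr_sumr; apply: eq_bigr => j _; rewrite !mxE mulrA. Qed.

Lemma dotNl u y : dot (- u) y = - dot u y.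
Proof. by rewrite -scaleN1r dotZl mulN1r. Qed.

Lemma dotBl u v y : dot (u - v) y = dot u y - dot v y.
Proof. by rewrite dotDl dotNl. Qed.

Lemma dotDr u v y : dot y (u + v) = dot y u + dot y v.
Proof. by rewrite dotC dotDl !(dotC y). Qed.

Lemma dotZr c u y : dot y (c *: u) = c * dot y u.
Proof. by rewrite dotC dotZl dotC. Qed.

Lemma dotNr u y : dot y (- u) = - dot y u.
Proof. by rewrite dotC dotNl dotC. Qed.

Lemma dotBr u v y : dot y (u - v) = dot y u - dot y v.
Proof. by rewrite dotDr dotNr. Qed.

Lemma dot0l y : dot 0 y = 0.
Proof. by rewrite -(scale0r 0) dotZl mul0r. Qed.

Lemma dot0r y : dot y 0 = 0.
Proof. by rewrite dotC dot0l. Qed.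

Lemma dot_sumr y (c : 'I_r -> R) (f : 'I_r -> V) :
  dot y (\sum_i c i *: f i) = \sum_i c i * dot y (f i).
Proof.
elim/big_rec2: _ => [|i x s _ IH]; first by rewrite dot0r.
by rewrite dotDr dotZr IH.
Qed.

Lemma dot_ge0 u : 0 <= dot u u.
Proof. by rewrite dotE sumr_ge0 // => j _; rewrite -expr2 sqr_ge0. Qed.

Lemma dot_eq0 u : (dot u u == 0) = (u == 0).
Proof.
apply/idP/idP => [|/eqP->]; last by rewrite dot0l.
rewrite dotE psumr_eq0; last by move=> j _; rewrite -expr2 sqr_ge0.
move=> /allP u0; apply/eqP/rowP => j; rewrite mxE.
by have /= := u0 j (mem_index_enum j); rewrite mulf_eq0 orbb => /eqP.
Qed.

Lemma dot_gt0 u : u != 0 -> 0 < dot u u.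
Proof. by move=> u0; rewrite lt_def dot_ge0 dot_eq0 u0. Qed.

Lemma pairingE y a : pairing y a = 2 * dot y a / dot a a.
Proof. by rewrite /pairing /coroot dotZr mulrAC. Qed.

Lemma pairingDl u v a : pairing (u + v) a = pairing u a + pairing v a.
Proof. by rewrite /pairing dotDl. Qed.

Lemma pairingZl c u a : pairing (c *: u) a = c * pairing u a.
Proof. by rewrite /pairing dotZl. Qed.

Lemma pairingNl u a : pairing (- u) a = - pairing u a.
Proof. by rewrite /pairing dotNl. Qed.

Lemma pairingBl u v a : pairing (u - v) a = pairing u a - pairing v a.
Proof. by rewrite pairingDl pairingNl. Qed.

Lemma pairing0l a : pairing 0 a = 0.
Proof. by rewrite /pairing dot0l. Qed.

Lemma pairingNr u a : pairing u (- a) = - pairing u a.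
Proof. by rewrite !pairingE dotNr dotNl dotNr opprK mulrN mulNr. Qed.

Lemma pairing_gt0 y a : a != 0 -> (0 < pairing y a) = (0 < dot y a).
Proof.
move=> a0; rewrite pairingE -mulrA pmulr_rgt0 // pmulr_lgt0 //.
by rewrite invr_gt0 dot_gt0.
Qed.

Lemma pairingii a : a != 0 -> pairing a a = 2.
Proof. by move=> a0; rewrite pairingE -mulrA mulfV ?mulr1 // dot_eq0. Qed.

Lemma corootK a : a != 0 -> coroot (coroot a) = a.
Proof.
move=> a0; have aa0 : dot a a != 0 by rewrite dot_eq0.
rewrite /coroot scalerA dotZl dotZr.
suff -> : 2 / (2 / dot a a * (2 / dot a a * dot a a)) * (2 / dot a a) = 1.
  by rewrite scale1r.
by field; rewrite aa0.
Qed.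

Lemma srefD a k u v : sref a k (u + v) = sref a 0 u + sref a k v.
Proof.
rewrite /sref !subr0 pairingDl -[pairing u a + _ - k]addrA scalerDl.
by rewrite opprD addrACA.
Qed.

Lemma sref0D a u v : sref a 0 (u + v) = sref a 0 u + sref a 0 v.
Proof. exact: srefD. Qed.

Lemma sref0Z a c u : sref a 0 (c *: u) = c *: sref a 0 u.
Proof. by rewrite /sref !subr0 pairingZl scalerBr scalerA. Qed.

Lemma sref00 a : sref a 0 0 = 0.
Proof. by rewrite /sref pairing0l subr0 scale0r subr0. Qed.

Lemma sref_shift a k y : sref a k y = sref a 0 y + k *: a.
Proof. by rewrite /sref subr0 scalerBl opprB addrCA [RHS]addrC. Qed.

Lemma dot_sref a u v : dot (sref a 0 u) (sref a 0 v) = dot u v.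
Proof.
rewrite /sref !subr0 !(dotBl, dotBr, dotZl, dotZr) !pairingE.
have [->|aa0] := eqVneq (dot a a) 0; first by rewrite !invr0 !mulr0 !mul0r !subr0.
by rewrite (dotC a v); field.
Qed.

Lemma pairing_sref a u v : pairing (sref a 0 u) (sref a 0 v) = pairing u v.
Proof. by rewrite /pairing /coroot [dot (sref _ _ v) _]dot_sref -sref0Z dot_sref. Qed.

Lemma sref0K a : involutive (sref a 0).
Proof.
move=> u; rewrite /sref !subr0 pairingBl pairingZl.
have [->|a0] := eqVneq a 0; first by rewrite !scaler0 !subr0.
rewrite pairingii // -addrA -opprD -scalerDl.
suff -> : pairing u a + (pairing u a - pairing u a * 2) = 0 by rewrite scale0r subr0.
ring.
Qed.

Lemma pairing_srefC a u v : pairing (sref a 0 u) v = pairing u (sref a 0 v).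
Proof. by rewrite -{1}(sref0K a v) pairing_sref. Qed.

Lemma sref_self a : a != 0 -> sref a 0 a = - a.
Proof.
move=> a0; rewrite /sref subr0 pairingii //.
by rewrite scaler_nat mulr2n opprD addrA subrr add0r.
Qed.

Lemma srefK a k : a != 0 -> involutive (sref a k).
Proof.
move=> a0 y; rewrite !(sref_shift a k) sref0D sref0K sref0Z sref_self //.
by rewrite scalerN addrNK.
Qed.

Lemma srefN a k : sref (- a) (- k) =1 sref a k.
Proof. by move=> y; rewrite /sref pairingNr -opprD scalerN scaleNr opprK. Qed.

End Euclidean.

Section Words.
Variables (R : realType) (r : nat) (al : 'I_r -> 'rV[R]_r) (th : 'rV[R]_r).
Local Notation V := 'rV[R]_r.
Implicit Types (u v y a : V) (A B : seq (option 'I_r)).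
Local Notation wlin := (wlin al th).
Local Notation wmap := (wmap al th).

Lemma wlinD A u v : wlin A (u + v) = wlin A u + wlin A v.
Proof. by elim: A => //= i A IH; rewrite IH sref0D. Qed.

Lemma wlinZ A c u : wlin A (c *: u) = c *: wlin A u.
Proof. by elim: A => //= i A IH; rewrite IH sref0Z. Qed.

Lemma wlinN A u : wlin A (- u) = - wlin A u.
Proof. by rewrite -scaleN1r wlinZ scaleN1r. Qed.

Lemma pairing_wlin A u v : pairing (wlin A u) (wlin A v) = pairing u v.
Proof. by elim: A => //= i A IH; rewrite pairing_sref IH. Qed.

Lemma wlin_cat A B y : wlin (A ++ B) y = wlin A (wlin B y).
Proof. by elim: A => //= i A ->. Qed.

Lemma wmap_cat A B y : wmap (A ++ B) y = wmap A (wmap B y).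
Proof. by elim: A => //= i A ->. Qed.

Lemma wlin_revK A y : wlin A (wlin (rev A) y) = y.
Proof.
elim: A y => //= i A IH y.
by rewrite rev_cons -cats1 wlin_cat IH /= sref0K.
Qed.

Lemma wmap_affine A y : wmap A y = wlin A y + wmap A 0.
Proof.
elim: A y => [|i A IH] y /=; first by rewrite addr0.
by rewrite IH srefD -[X in sref _ _ X]add0r srefD sref00 add0r.
Qed.

Lemma pairing_wmap A x a :
  pairing (wmap A x) a = pairing x (wlin (rev A) a) + pairing (wmap A 0) a.
Proof. by rewrite wmap_affine pairingDl -{1}(wlin_revK A a) pairing_wlin. Qed.

Lemma wmap_sref A a k y :
  wmap A (sref a k y) = sref (wlin A a) (k + pairing (wmap A 0) (wlin A a)) (wmap A y).
Proof.
rewrite /sref wmap_affine wlinD wlinN wlinZ (wmap_affine A y) pairingDl pairing_wlin.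
rewrite -!addrA; congr (_ + _); rewrite addrC; congr (_ + _).
by congr (- (_ *: _)); ring.
Qed.

End Words.

Section Crossings.
Variables (n : nat) (D U : nat -> bool) (f : nat -> int).
Hypothesis fS : forall k, (k < n)%N -> f k.+1 = f k - (D k)%:Z + (U k)%:Z.
Hypothesis DUx : forall k, (k < n)%N -> ~~ (D k && U k).
Hypothesis noDU : forall j k, (j < k < n)%N -> D j -> U k -> f j.+1 <> f k.
Hypothesis noUD : forall j k, (j < k < n)%N -> U j -> D k -> f j.+1 <> f k.

Lemma count_DU_telescope m : (m <= n)%N ->
  (count D (iota 0 m))%:Z - (count U (iota 0 m))%:Z = f 0%N - f m.
Proof.
elim: m => [|m IH] lemn; first by rewrite /= !subrr.
rewrite -addn1 iotaD !count_cat /= !addn0 add0n.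
by move: (IH (ltnW lemn)); rewrite addn1 fS //; case: (D m); case: (U m) => /=; lia.
Qed.

Lemma const_between j d : (j + d < n)%N ->
  ~~ has (fun i => D i || U i) (iota j.+1 d) -> f j.+1 = f (j.+1 + d).
Proof.
elim: d => [|d IH] lt_n; first by rewrite addn0.
rewrite -[d.+1]addn1 iotaD has_cat /= orbF negb_or negb_or => /and3P[quiet /negbTE Dd /negbTE Ud].
rewrite addn1 addnS (fS (_ : j.+1 + d < n)%N) ?Dd ?Ud ?subr0 ?addr0; last by lia.
by rewrite IH //; lia.
Qed.

Let opposite j k := (D j && U k) || (U j && D k).

(* Between the two closest opposite crossings the level is constant, which [noDU]/[noUD] forbid. *)
Lemma no_opposite d j : (j + d.+1 < n)%N -> ~~ opposite j (j + d.+1).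
Proof.
elim/ltn_ind: d j => d IH j lt_n; apply/negP => ojk.
have [/hasP[i]|quiet] := boolP (has (fun i => D i || U i) (iota j.+1 d)); last first.
  have := const_between (_ : j + d < n)%N quiet; rewrite addSnnS => fjk.
  by case/orP: ojk => /andP[Xj Yk];
    [apply: (noDU _ Xj Yk) | apply: (noUD _ Xj Yk)] => //; lia.
rewrite mem_iota => /andP[ji ij] ei.
have Ei : i = (j + (i - j.+1).+1)%N by lia.
have Ek : (j + d.+1 = i + (j + d - i).+1)%N by lia.
have left_pair : opposite j i -> False.
  by rewrite Ei; apply/negP/IH => //; lia.
have right_pair : opposite i (j + d.+1) -> False.
  by rewrite Ek; apply/negP/IH => //; lia.
by case/orP: ojk => /andP[Xj Yk]; case/orP: ei => ei;
  [apply: right_pair | apply: left_pair | apply: left_pair | apply: right_pair];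
  rewrite /opposite ?Xj ?Yk ?ei ?orbT.
Qed.

Lemma crossings_one_way :
  (forall k, (k < n)%N -> ~~ U k) \/ (forall k, (k < n)%N -> ~~ D k).
Proof.
have [/hasP[k]|/hasPn noU] := boolP (has U (iota 0 n)); last first.
  by left => k lt_kn; apply: noU; rewrite mem_iota.
rewrite mem_iota add0n => /andP[_ lt_kn] Uk; right => j lt_jn; apply/negP => Dj.
have [ltjk|ltkj|ejk] := ltngtP j k; last by have := DUx lt_jn; rewrite Dj ejk Uk.
- have := @no_opposite (k - j.+1) j; rewrite (_ : j + _ = k)%N; last by lia.
  by rewrite /opposite Dj Uk => /(_ lt_kn).
- have := @no_opposite (j - k.+1) k; rewrite (_ : k + _ = j)%N; last by lia.
  by rewrite /opposite Dj Uk orbT => /(_ lt_jn).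
Qed.

Lemma count_crossings (m : int) : 0 <= m -> f 0%N - f n = m ->
  (count D (iota 0 n))%:Z = m /\ count U (iota 0 n) = 0%N.
Proof.
move=> m_ge0 fm; have := count_DU_telescope (leqnn n); rewrite fm.
have count0 (P : nat -> bool) : (forall k, (k < n)%N -> ~~ P k) -> count P (iota 0 n) = 0%N.
  move=> noP; apply/eqP; rewrite -leqn0 leqNgt -has_count; apply/hasPn => k.
  by rewrite mem_iota add0n => /andP[_]; apply: noP.
by case: crossings_one_way => /count0 ->; split; lia.
Qed.

End Crossings.

Lemma sum_mul_gt0 (F : numDomainType) (I : finType) (c g : I -> F) :
  (forall i, 0 <= c i) -> (forall i, 0 < g i) -> (exists i, c i != 0) ->
  0 < \sum_i c i * g i.
Proof.
move=> c_ge0 g_gt0 [i0 ci0]; rewrite lt_def sumr_ge0 ?andbT; last first.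
  by move=> i _; rewrite mulr_ge0 // ltW.
apply/eqP => /psumr_eq0P sum0.
have /eqP := sum0 (fun i _ => mulr_ge0 (c_ge0 i) (ltW (g_gt0 i))) i0 isT.
by rewrite mulf_eq0 (negbTE ci0) /= gt_eqF.
Qed.

Lemma sum_scale_neq0 (F : pzRingType) (M : lmodType F) (I : finType) (c : I -> F) (v : I -> M) :
  \sum_i c i *: v i != 0 -> exists i, c i != 0.
Proof.
have [/existsP//|/existsPn c0] := boolP [exists i, c i != 0].
by rewrite big1 ?eqxx // => i _; rewrite (eqP (negbNE (c0 i))) scale0r.
Qed.

Lemma opp_neq (F : numFieldType) (M : lmodType F) (v : M) : v != 0 -> v != - v.
Proof.
apply: contra => /eqP vNv.
have : (2%:R : F) *: v == 0 by rewrite scaler_nat mulr2n {1}vNv addNr.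
by rewrite scaler_eq0 pnatr_eq0.
Qed.

Lemma floor_itv01 (F : archiRealFieldType) (x : F) : 0 < x < 1 -> Num.floor x = 0.
Proof. by move=> /andP[x_gt0 x_lt1]; apply: floor_def; rewrite add0r ltW. Qed.

Lemma floor_itvN10 (F : archiRealFieldType) (x : F) : 0 < - x < 1 -> Num.floor x = -1.
Proof.
rewrite oppr_gt0 ltrNl => /andP[x_lt0 x_gtN1].
by apply: floor_def; rewrite addNr intrN ltW.
Qed.

Section RootSystem.
Variables (R : realType) (r : nat) (Phi : seq 'rV[R]_r) (al : 'I_r -> 'rV[R]_r)
  (th : 'rV[R]_r).
Hypothesis HPhi : is_irred_cryst_root_system Phi.
Hypothesis Hal : is_simple_roots Phi al.
Hypothesis Hth : highest_coroot Phi al th.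
Local Notation V := 'rV[R]_r.
Implicit Types (x y z a b g : V).
Local Notation pos := (pos_root Phi al).
Local Notation alcove := (alcove0 Phi al).
Local Notation s_ i := (sref (aroot al th i) (@ashift R r i)).

Lemma root_neq0 b : b \in Phi -> b != 0.
Proof. by case: HPhi => Phi0 _ _ _ _; apply: contraTneq => ->. Qed.

Lemma sref_root a b : a \in Phi -> b \in Phi -> sref a 0 b \in Phi.
Proof. by case: HPhi => _ + _ _ _; apply. Qed.

Lemma rootN b : b \in Phi -> - b \in Phi.
Proof. by move=> b_in; rewrite -sref_self ?root_neq0 // sref_root. Qed.

Lemma pairing_root_int a b : a \in Phi -> b \in Phi -> pairing b a \is a Num.int.
Proof. by case: HPhi => _ _ + _ _; apply. Qed.

Lemma simple_root_in i : al i \in Phi.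
Proof. by case: Hal. Qed.

Lemma highest_root_in : th \in Phi.
Proof. by case: Hth. Qed.

Lemma aroot_in i : aroot al th i \in Phi.
Proof. by case: i => [j|] /=; [exact: simple_root_in | exact: rootN highest_root_in]. Qed.

Lemma wlin_root A b : b \in Phi -> wlin al th A b \in Phi.
Proof. by elim: A => //= i A IH b_in; rewrite sref_root ?aroot_in ?IH. Qed.

Lemma simple_coef_uniq (c d : 'I_r -> R) :
  \sum_i c i *: al i = \sum_i d i *: al i -> c =1 d.
Proof.
case: Hal => _ indep _ cd i; apply/eqP; rewrite -subr_eq0; apply/eqP.
apply: (indep (fun i => c i - d i)).
rewrite (eq_bigr (fun i => c i *: al i - d i *: al i)); last by move=> j _; rewrite scalerBl.
by rewrite sumrB cd subrr.
Qed.

Lemma simple_root_pos j : pos (al j).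
Proof.
split; first exact: simple_root_in.
exists (fun i => (i == j)%:R); split => [i|]; first by rewrite ler0n.
rewrite (bigD1 j) //= eqxx scale1r big1 ?addr0 // => i /negbTE ->.
by rewrite scale0r.
Qed.

Lemma root_posVneg b : b \in Phi -> pos b \/ pos (- b).
Proof.
move=> b_in; case: Hal => _ _ /(_ b b_in) [c [Eb [c_ge0|c_le0]]].
  by left; split=> //; exists (fun i => (c i)%:~R); split=> // i; rewrite ler0z.
right; split; first exact: rootN.
exists (fun i => (- c i)%:~R); split => [i|]; first by rewrite ler0z oppr_ge0.
by rewrite Eb -sumrN; apply: eq_bigr => i _; rewrite intrN scaleNr.
Qed.

Section Regular.
Variable z : V.
Hypothesis z_gt0 : forall i, 0 < pairing z (al i).

Lemma pairing_pos_gt0 b : pos b -> 0 < pairing z b.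
Proof.
move=> [b_in [c [c_ge0 Eb]]]; rewrite pairing_gt0 ?root_neq0 // Eb dot_sumr.
apply: sum_mul_gt0 => // [i|]; first by rewrite -pairing_gt0 ?root_neq0 ?simple_root_in.
by apply: (@sum_scale_neq0 _ _ _ c al); rewrite -Eb root_neq0.
Qed.

Lemma pairing_le_highest b : b \in Phi ->
  pairing z b <= pairing z th /\ (b != th -> pairing z b < pairing z th).
Proof.
move=> b_in; case: Hth => th_in /(_ b b_in) [c [c_ge0 Ec]].
have gap : pairing z th - pairing z b = \sum_i c i * pairing z (al i).
  by rewrite /pairing -dotBr Ec dot_sumr.
split; first by rewrite -subr_ge0 gap sumr_ge0 // => i _; rewrite mulr_ge0 // ltW.
move=> bth; rewrite -subr_gt0 gap; apply: sum_mul_gt0 => //.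
apply: (@sum_scale_neq0 _ _ _ c (fun i => coroot (al i))).
rewrite -Ec subr_eq0; apply: contra bth => /eqP Eth.
by rewrite -(corootK (root_neq0 b_in)) -Eth corootK // root_neq0.
Qed.

End Regular.

Lemma exists_regular : exists z, forall i, 0 < pairing z (al i).
Proof.
pose M : 'M[R]_r := \matrix_(i, j) coroot (al i) 0 j.
have M_unit : M \in unitmx.
  rewrite -row_free_unit -kermx_eq0; apply/negPn/negP => /rowV0Pn [v /sub_kermxP vM v0].
  move/negP: v0; apply; apply/eqP/rowP => i; rewrite mxE.
  case: Hal => _ indep _.
  have aa0 j : dot (al j) (al j) != 0 by rewrite dot_eq0 root_neq0 ?simple_root_in.
  have sum0 : \sum_j (v 0 j * (2 / dot (al j) (al j))) *: al j = 0.
    move: vM; rewrite mulmx_sum_row => vM0; rewrite -[RHS]vM0; apply: eq_bigr => j _.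
    by rewrite -scalerA; congr (_ *: _); apply/rowP => k; rewrite !mxE.
  move/eqP: (indep _ sum0 i); rewrite !mulf_eq0 invr_eq0 (negbTE (aa0 i)).
  by rewrite orbF pnatr_eq0 orbF => /eqP.
exists ((const_mx 1 : 'rV[R]_r) *m invmx M^T) => i.
have E : (const_mx 1 : 'rV[R]_r) *m invmx M^T *m M^T = const_mx 1.
  by rewrite mulmxKV // unitmx_tr.
suff -> : pairing ((const_mx 1 : 'rV[R]_r) *m invmx M^T) (al i) = 1 by [].
transitivity (((const_mx 1 : 'rV[R]_r) *m invmx M^T *m M^T) 0 i); last by rewrite E mxE.
by rewrite /pairing dotE [RHS]mxE; apply: eq_bigr => j _; rewrite !mxE.
Qed.

Lemma highest_root_pos : pos th.
Proof.
have [z z_gt0] := exists_regular.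
case: (root_posVneg highest_root_in) => // pos_Nth; exfalso.
have := pairing_pos_gt0 z_gt0 pos_Nth.
have [+ _] := pairing_le_highest z_gt0 (rootN highest_root_in).
by rewrite pairingNr; lra.
Qed.

Lemma alcove0P x :
  alcove x <-> (forall i, 0 < pairing x (al i)) /\ pairing x th < 1.
Proof.
split => [x_in|[x_gt0 x_lt1] b pos_b].
  by split => [i|]; [case: (x_in _ (simple_root_pos i)) | case: (x_in _ highest_root_pos)].
split; first exact: pairing_pos_gt0.
have [le_th _] := pairing_le_highest x_gt0 (proj1 pos_b); exact: le_lt_trans le_th x_lt1.
Qed.

Lemma alcove0_exists : exists x, alcove x.
Proof.
have [z z_gt0] := exists_regular.
have zth_gt0 := pairing_pos_gt0 z_gt0 highest_root_pos.
exists ((2 * pairing z th)^-1 *: z); apply/alcove0P; split => [i|].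
  by rewrite pairingZl mulr_gt0 // invr_gt0 mulr_gt0.
rewrite pairingZl invfM -mulrA mulVf ?gt_eqF // mulr1 invf_lt1 //; lra.
Qed.

Lemma floor_pairing_eq x y b : b \in Phi ->
  (forall g, pos g -> g = b \/ g = - b -> 0 < pairing x g < 1 /\ 0 < pairing y g < 1) ->
  Num.floor (pairing x b) = Num.floor (pairing y b).
Proof.
move=> b_in xy_in; case: (root_posVneg b_in) => [pos_b|pos_Nb].
  by have [/floor_itv01 -> /floor_itv01 ->] := xy_in _ pos_b (or_introl erefl).
have [] := xy_in _ pos_Nb (or_intror erefl); rewrite !pairingNr.
by move=> /floor_itvN10 -> /floor_itvN10 ->.
Qed.

Lemma floor_pairing_alcove0 x y b : alcove x -> alcove y -> b \in Phi ->
  Num.floor (pairing x b) = Num.floor (pairing y b).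
Proof.
move=> x_in y_in b_in; apply: floor_pairing_eq => // g pos_g _.
by split; apply/andP; [exact: x_in | exact: y_in].
Qed.

(* A negative image would force [g] to be a multiple of [alpha_j]. *)
Lemma sref_simple_pos j g : pos g -> g != al j -> g != - al j -> pos (sref (al j) 0 g).
Proof.
move=> [g_in [c [c_ge0 Eg]]] g_j g_Nj.
have sg_in : sref (al j) 0 g \in Phi by rewrite sref_root ?simple_root_in.
case: (Hal) => _ _ /(_ _ sg_in) [z [Ez [z_ge0|z_le0]]].
  by split => //; exists (fun i => (z i)%:~R); split => // i; rewrite ler0z.
pose c' i := c i - (i == j)%:R * pairing g (al j).
have Es : sref (al j) 0 g = \sum_i c' i *: al i.
  rewrite (eq_bigr (fun i => c i *: al i - ((i == j)%:R * pairing g (al j)) *: al i));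
    last by move=> i _; rewrite /c' scalerBl.
  rewrite sumrB -Eg /sref subr0; congr (_ - _).
  rewrite (bigD1 j) //= eqxx mul1r big1 ?addr0 // => i /negbTE ->.
  by rewrite mul0r scale0r.
have Ec := simple_coef_uniq (etrans (esym Ez) Es).
have c0 i : i != j -> c i = 0.
  move=> /negbTE ij; have := Ec i; rewrite /c' ij mul0r subr0 => Ezc.
  by apply/eqP; rewrite eq_le c_ge0 andbT -Ezc lerz0.
have Egj : g = c j *: al j.
  by rewrite Eg (bigD1 j) //= big1 ?addr0 // => i ij; rewrite c0 // scale0r.
case: HPhi => _ _ _ reduced _.
by case: (reduced (al j) (c j) (simple_root_in j)); rewrite -?Egj // => cj;
  [move: g_j | move: g_Nj]; rewrite Egj cj ?scale1r ?scaleN1r eqxx.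
Qed.

(* Evaluate the regular element [z] on the root s_theta(g): both it and its negative are
   bounded by (z, theta^vee). *)
Lemma pairing_highest01 g : pos g -> g != th -> pairing th g = 0 \/ pairing th g = 1.
Proof.
move=> pos_g g_th; have g_in := proj1 pos_g.
have [z z_gt0] := exists_regular.
have zg_gt0 := pairing_pos_gt0 z_gt0 pos_g.
have [_ /(_ g_th) zg_lt] := pairing_le_highest z_gt0 g_in.
have sg_in := sref_root highest_root_in g_in.
have [le1 _] := pairing_le_highest z_gt0 sg_in.
have [le2 _] := pairing_le_highest z_gt0 (rootN sg_in).
have Ezsg : pairing z (sref th 0 g) = pairing z g - pairing z th * pairing th g.
  by rewrite -pairing_srefC /sref subr0 pairingBl pairingZl.
rewrite pairingNr Ezsg in le2; rewrite Ezsg in le1.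
have zth_gt0 : 0 < pairing z th by lra.
have /intrP [m Em] := pairing_root_int g_in highest_root_in.
have m_lt2 : m < 2 by rewrite -(ltr_int R) -Em; nra.
have m_gtN1 : -1 < m by rewrite -(ltr_int R) -Em intrN mulr1z; nra.
have [m0|m1] : m = 0 \/ m = 1 by lia.
  by left; rewrite Em m0.
by right; rewrite Em m1.
Qed.

Lemma pairing_sref_alcove0 x i g : alcove x -> pos g ->
  g != aroot al th i -> g != - aroot al th i -> 0 < pairing (s_ i x) g < 1.
Proof.
move=> x_in pos_g; case: i => [j|] /= g_i g_Ni.
  by rewrite pairing_srefC; case: (x_in _ (sref_simple_pos pos_g g_i g_Ni)) => -> ->.
rewrite opprK in g_Ni.
have [x_gt0 _] := (alcove0P x).1 x_in.
have [_ /(_ g_Ni) xg_lt] := pairing_le_highest x_gt0 (proj1 pos_g).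
have [xg_gt0 _] := x_in _ pos_g; have [_ xth_lt1] := x_in _ highest_root_pos.
rewrite /sref pairingBl pairingZl !pairingNr pairingNl.
by case: (pairing_highest01 pos_g g_Ni) => ->; apply/andP; split; lra.
Qed.

Lemma floor_pairing_sref_alcove0 x i b : alcove x -> b \in Phi ->
  b != aroot al th i -> b != - aroot al th i ->
  Num.floor (pairing (s_ i x) b) = Num.floor (pairing x b).
Proof.
move=> x_in b_in b_i b_Ni; apply: floor_pairing_eq => // g pos_g Eg.
split; last by apply/andP; exact: x_in.
by apply: pairing_sref_alcove0 => //; case: Eg => ->; rewrite ?eqr_opp ?eqr_oppLR.
Qed.

Lemma ashift_int i : @ashift R r i \is a Num.int.
Proof. by case: i => [j|] /=; rewrite ?int_num0 // rpredN int_num1. Qed.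

Lemma pairing_wmap0_int A b : b \in Phi -> pairing (wmap al th A 0) b \is a Num.int.
Proof.
elim: A b => [|i A IH] b b_in /=; first by rewrite pairing0l int_num0.
rewrite /sref pairingBl pairingZl rpredB ?IH // rpredM ?pairing_root_int ?aroot_in //.
by rewrite rpredB ?IH ?aroot_in ?ashift_int.
Qed.

Lemma pairing_aroot_alcove0 x i : alcove x ->
  0 < pairing x (aroot al th i) - @ashift R r i < 1.
Proof.
move=> x_in; case: i => [j|] /=; first by rewrite subr0; apply/andP; exact: x_in (simple_root_pos j).
by rewrite pairingNr; case: (x_in _ highest_root_pos) => *; apply/andP; split; lra.
Qed.

Section Chain.
Variable w : seq (option 'I_r).
Hypothesis w_red : reduced_word al th w.
Local Notation i_ k := (nth None w k).
Local Notation w_ k := (wmap al th (take k w)).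

Definition chain_root k := wlin al th (take k w) (aroot al th (i_ k)).

(* The integer [m] with [w_ k.+1 = s_(chain_root k, m) \o w_ k]. *)
Definition chain_level k := @ashift R r (i_ k) + pairing (w_ k 0) (chain_root k).

Lemma chain_root_in k : chain_root k \in Phi.
Proof. by rewrite wlin_root ?aroot_in. Qed.

Lemma chain_level_int k : chain_level k \is a Num.int.
Proof. by rewrite rpredD ?ashift_int ?pairing_wmap0_int ?chain_root_in. Qed.

Lemma wmap_take_rcons k y : (k < size w)%N -> w_ k.+1 y = w_ k (s_ (i_ k) y).
Proof. by move=> lt_kw; rewrite (take_nth None) // -cats1 wmap_cat. Qed.

Lemma wmap_takeS k y : (k < size w)%N ->
  w_ k.+1 y = sref (chain_root k) (chain_level k) (w_ k y).
Proof. by move=> lt_kw; rewrite wmap_take_rcons // wmap_sref. Qed.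

Lemma pairing_chain_root x k : pairing (w_ k x) (chain_root k) - chain_level k =
  pairing x (aroot al th (i_ k)) - @ashift R r (i_ k).
Proof.
rewrite /chain_level /chain_root wmap_affine pairingDl pairing_wlin.
by rewrite opprD addrACA subrr addr0.
Qed.

(* If two steps of the gallery crossed the same hyperplane, deleting both letters would
   give a shorter word for the same element. *)
Lemma chain_sref_neq j k : (j < k < size w)%N ->
  ~ sref (chain_root j) (chain_level j) =1 sref (chain_root k) (chain_level k).
Proof.
move=> /andP[lt_jk lt_kw] Ejk; have lt_jw := ltn_trans lt_jk lt_kw.
pose B := drop j.+1 (take k w).
have Etk : take k w = take j.+1 w ++ B.
  by rewrite -{1}(cat_take_drop j.+1 (take k w)) take_takel.
have Ew : wmap al th (take j w ++ B ++ drop k.+1 w) =1 wmap al th w.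
  move=> y; rewrite -[in RHS](cat_take_drop k.+1 w) [in RHS]wmap_cat wmap_takeS // -Ejk.
  rewrite Etk [wmap _ _ (_ ++ B) _]wmap_cat wmap_takeS // srefK ?root_neq0 ?chain_root_in //.
  by rewrite !wmap_cat.
have := w_red Ew; rewrite !size_cat size_takel ?(ltnW lt_jw) // /B.
by rewrite !size_drop size_takel ?(ltnW lt_kw) //; lia.
Qed.

Section Level.
Variables (x a : V).
Hypothesis x_in : alcove x.
Hypothesis a_in : a \in Phi.

Definition level k := Num.floor (pairing (w_ k x) a).

Lemma level_down k : (k < size w)%N -> chain_root k = a ->
  level k.+1 = level k - 1 /\ chain_level k = (level k)%:~R.
Proof.
move=> lt_kw Ea; have /intrP [m Em] := chain_level_int k.
have := pairing_aroot_alcove0 (i_ k) x_in; rewrite -pairing_chain_root Ea => /andP[t1 t2].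
have Eh : pairing (w_ k.+1 x) a = chain_level k - (pairing (w_ k x) a - chain_level k).
  by rewrite wmap_takeS // Ea /sref pairingBl pairingZl pairingii ?root_neq0 //; ring.
have -> : level k = m by apply: floor_def; rewrite -Em; apply/andP; split; lra.
split=> //; apply: floor_def; rewrite /level Eh intrB addrNK -Em.
by apply/andP; split; lra.
Qed.

Lemma level_up k : (k < size w)%N -> chain_root k = - a ->
  level k.+1 = level k + 1 /\ chain_level k = - (level k.+1)%:~R.
Proof.
move=> lt_kw Ea; have /intrP [m Em] := chain_level_int k.
have := pairing_aroot_alcove0 (i_ k) x_in.
rewrite -pairing_chain_root Ea pairingNr => /andP[t1 t2].
have Eh : pairing (w_ k.+1 x) a = - chain_level k + (- pairing (w_ k x) a - chain_level k).
  rewrite wmap_takeS // Ea /sref pairingBl pairingZl pairingNr pairingNl.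
  by rewrite pairingii ?root_neq0 //; ring.
have Ek1 : level k.+1 = - m.
  by apply: floor_def; rewrite /level Eh intrD intrN mulr1z -Em; apply/andP; split; lra.
have Ek : level k = - m - 1.
  by apply: floor_def; rewrite /level subrK intrB intrN mulr1z -Em; apply/andP; split; lra.
by rewrite Ek1 Ek subrK Em intrN opprK.
Qed.

Lemma level_const k : (k < size w)%N -> chain_root k != a -> chain_root k != - a ->
  level k.+1 = level k.
Proof.
move=> lt_kw ka kNa.
rewrite /level wmap_take_rcons // (pairing_wmap al th _ (s_ _ x)) (pairing_wmap al th _ x).
have /intrP [t Et] := pairing_wmap0_int (take k w) a_in.
rewrite Et !floorDrz ?intr_int //; congr (_ + _).
set g := wlin al th (rev (take k w)) a.
have Eg : wlin al th (take k w) g = a by rewrite /g wlin_revK.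
apply: floor_pairing_sref_alcove0 => //; first by rewrite /g wlin_root.
  by apply: contra ka => /eqP Eig; rewrite /chain_root -Eg -Eig.
by apply: contra kNa => /eqP Eig; rewrite /chain_root -Eg Eig wlinN opprK.
Qed.

Lemma level_step k : (k < size w)%N ->
  level k.+1 = level k - (chain_root k == a)%:Z + (chain_root k == - a)%:Z.
Proof.
move=> lt_kw; have aNa := opp_neq (root_neq0 a_in).
have [ka|ka] := eqVneq (chain_root k) a.
  by have [-> _] := level_down lt_kw ka; rewrite ka (negbTE aNa) addr0.
have [kNa|kNa] := eqVneq (chain_root k) (- a).
  by have [-> _] := level_up lt_kw kNa; rewrite subr0.
by rewrite level_const // subr0 addr0.
Qed.

Lemma level_no_return j k : (j < k < size w)%N ->
  (chain_root j == a) && (chain_root k == - a) ||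
  (chain_root j == - a) && (chain_root k == a) -> level j.+1 <> level k.
Proof.
move=> /andP[lt_jk lt_kw] crossings Ejk; have lt_jw := ltn_trans lt_jk lt_kw.
apply: (@chain_sref_neq j k); first by rewrite lt_jk.
case/orP: crossings => /andP[/eqP ja /eqP ka].
  have [Ej1 mj] := level_down lt_jw ja; have [Ek1 mk] := level_up lt_kw ka.
  by move=> y; rewrite ja ka mj mk Ek1 -Ejk Ej1 subrK srefN.
have [Ej1 mj] := level_up lt_jw ja; have [Ek1 mk] := level_down lt_kw ka.
by move=> y; rewrite ja ka mj mk -Ejk srefN.
Qed.

End Level.

Lemma chain_in b : b \in chain al th w -> b \in Phi.
Proof. by move=> /mapP [k _ ->]; exact: chain_root_in. Qed.

Section Weight.
Variable l : V.
Hypothesis l_wt : weight Phi l.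
Hypothesis w_dec : decomp_vml Phi al th l w.

(* [w] carries [A_o] onto [A_o - l], so the level drops by exactly [(l, a^vee)]. *)
Lemma level_drop x a : alcove x -> a \in Phi ->
  ((level x a 0 - level x a (size w))%:~R : R) = pairing l a.
Proof.
move=> x_in a_in; have /intrP [m Em] := l_wt a_in.
have y_in : alcove (wmap al th w x + l) by apply/(w_dec _).1; exists x.
rewrite /level take0 take_size.
have -> : pairing (wmap al th w x) a = pairing (wmap al th w x + l) a + (- m)%:~R.
  by rewrite pairingDl intrN -Em; ring.
rewrite floorDrz ?intr_int // intrKfloor.
by rewrite (floor_pairing_alcove0 y_in x_in a_in) Em; congr (_ %:~R); ring.
Qed.

Lemma count_chain_root a : a \in Phi -> 0 <= pairing l a ->
  (count (pred1 a) (chain al th w))%:R = pairing l a /\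
  count (pred1 (- a)) (chain al th w) = 0%N.
Proof.
move=> a_in la_ge0; have [x x_in] := alcove0_exists.
have drop := level_drop x_in a_in.
have drop_ge0 : 0 <= level x a 0 - level x a (size w) by rewrite -(ler0z R) drop.
have not_both k : (k < size w)%N -> ~~ ((chain_root k == a) && (chain_root k == - a)).
  by move=> _; apply/negP => /andP[/eqP-> /eqP]; apply/eqP/opp_neq/root_neq0.
have no_down_up j k : (j < k < size w)%N -> chain_root j == a -> chain_root k == - a ->
    level x a j.+1 <> level x a k.
  by move=> jk ja ka; apply: level_no_return; rewrite ?ja ?ka.
have no_up_down j k : (j < k < size w)%N -> chain_root j == - a -> chain_root k == a ->
    level x a j.+1 <> level x a k.
  by move=> jk ja ka; apply: level_no_return; rewrite ?ja ?ka ?orbT.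
have [cD cU] := count_crossings (level_step x_in a_in) not_both no_down_up no_up_down
  drop_ge0 erefl.
by rewrite /chain !count_map -drop -cD.
Qed.

Lemma chain_root_pairing_gt0 b : b \in chain al th w -> 0 < pairing l b.
Proof.
move=> b_chain; have b_in := chain_in b_chain.
rewrite ltNge; apply/negP => lb_le0.
have lNb_ge0 : 0 <= pairing l (- b) by rewrite pairingNr oppr_ge0.
have [_ /eqP] := count_chain_root (rootN b_in) lNb_ge0.
by rewrite opprK -leqn0 leqNgt -has_count has_pred1 b_chain.
Qed.

Lemma chain_root_pos : dominant Phi al l -> forall b, b \in chain al th w -> pos b.
Proof.
move=> l_dom b b_chain; have := chain_root_pairing_gt0 b_chain.
case: (root_posVneg (chain_in b_chain)) => // pos_Nb.
by have := l_dom _ pos_Nb; rewrite pairingNr oppr_ge0 leNgt => /negP.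
Qed.

Lemma chain_root_neg : antidominant Phi al l -> forall b, b \in chain al th w -> pos (- b).
Proof.
move=> l_adom b b_chain; have := chain_root_pairing_gt0 b_chain.
case: (root_posVneg (chain_in b_chain)) => // pos_b.
by have := l_adom _ pos_b; rewrite pairingNl oppr_ge0 leNgt => /negP.
Qed.

End Weight.
End Chain.
End RootSystem.

Unset Implicit Arguments.
Set Strict Implicit.

Theorem lemma6p2 (R : realType) (r : nat) (Phi : seq 'rV[R]_r)
  (al : 'I_r -> 'rV[R]_r) (th l : 'rV[R]_r) (w : seq (option 'I_r)) :
  (0 < r)%N ->
  is_irred_cryst_root_system Phi ->
  is_simple_roots Phi al ->
  highest_coroot Phi al th ->
  weight Phi l ->
  decomp_vml Phi al th l w ->
  reduced_word al th w ->
  [/\ (forall a, a \in Phi -> 0 <= pairing l a ->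
         (count (pred1 a) (chain al th w))%:R = pairing l a /\
         count (pred1 (- a)) (chain al th w) = 0%N),
      (dominant Phi al l -> forall b, b \in chain al th w -> pos_root Phi al b)
    & (antidominant Phi al l -> forall b, b \in chain al th w -> pos_root Phi al (- b))].
Proof.
move=> _ HPhi Hal Hth l_wt w_dec w_red; split.
- exact: count_chain_root.
- exact: chain_root_pos.
- exact: chain_root_neg.
Qed.
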